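(* Let $n>2$ and let $M_n$ be the graph defined below. For every $k>0$ and all $i\ne j$ in $\{1,\dots,n\}$, the graph $\sigma^{ij}_{\bowtie}(M_n)$ is not a $k$-polygon-circle graph.
   Context: $M_n$ has $6n$ nodes $v_1,\dots,v_{6n}$: the nodes $v_1,\dots,v_{4n}$ form a path (edges $\{v_t,v_{t+1}\}$, $1\le t<4n$), and for each $i\in\{1,\dots,n\}$ there are the additional edges $\{v_{4i-3},v_{4n+i}\}$, $\{v_{4i-2},v_{5n+i}\}$ and $\{v_{4n+i},v_{5n+i}\}$. For $i\in\{1,\dots,n\}$, $H_i$ is the subgraph with vertices $v_{4n+i},v_{5n+i}$ and the edge between them, and $\sigma_i:V(H_1)\to V(H_i)$ is the isomorphism with $\sigma_i(v_{4n+1})=v_{5n+i}$, $\sigma_i(v_{5n+1})=v_{4n+i}$; $\sigma^{ij}=\sigma_i\circ\sigma_j^{-1}$. Crossing: given a graph $G$ and two independent isomorphic subgraphs $H=(V_1,E_1)$, $H'=(V_2,E_2)$ (disjoint vertex sets, no edges of $G$ between them) with isomorphism $\sigma:V_1\to V_2$, the crossing $\sigma_{\bowtie}(G)$ is obtained from $G$ by replacing every pair of edges $\{u,v\}\in E_1$, $\{\sigma(u),\sigma(v)\}\in E_2$ by the pair $\{u,\sigma(v)\}$, $\{\sigma(u),v\}$. A $k$-polygon-circle graph is the intersection graph of a family of convex polygons with $k$ vertices, all vertices lying on a common circle. *)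

From HB Require Import structures.
From mathcomp Require Import all_boot all_order all_algebra.
From mathcomp Require Import Rstruct.
Set Implicit Arguments. Unset Strict Implicit. Unset Printing Implicit Defensive.
Import Order.TTheory GRing.Theory Num.Theory.

(* directed version of the edge list of M_n, on 1-based labels *)
Definition Medge_dir (n a b : nat) : bool :=
  ((1 <= a) && (a < 4 * n) && (b == a.+1)) ||
  has (fun i => [|| (a == 4 * i - 3) && (b == 4 * n + i),
                    (a == 4 * i - 2) && (b == 5 * n + i)
                  | (a == 4 * n + i) && (b == 5 * n + i)]) (iota 1 n).

Definition Medge (n a b : nat) : bool := Medge_dir n a b || Medge_dir n b a.

(* vertex x : 'I_(6n) is v_{x+1} *)
Definition M (n : nat) : rel 'I_(6 * n) :=
  fun x y => Medge n (val x).+1 (val y).+1.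

Definition H (n i : nat) : rel 'I_(6 * n) :=
  fun x y => let a := (val x).+1 in let b := (val y).+1 in
  ((a == 4 * n + i) && (b == 5 * n + i)) || ((b == 4 * n + i) && (a == 5 * n + i)).

Definition liftv (n : nat) (f : nat -> nat) (x : 'I_(6 * n)) : 'I_(6 * n) :=
  insubd x (f (val x).+1).-1.

(* sigma_i : V(H_1) -> V(H_i), v_{4n+1} |-> v_{5n+i}, v_{5n+1} |-> v_{4n+i}
   (extended by the identity outside V(H_1)) *)
Definition sigma_nat (n i a : nat) : nat :=
  if a == 4 * n + 1 then 5 * n + i
  else if a == 5 * n + 1 then 4 * n + i else a.
Definition sigma_inv_nat (n j a : nat) : nat :=
  if a == 5 * n + j then 4 * n + 1
  else if a == 4 * n + j then 5 * n + 1 else a.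

(* sigma^{ij} = sigma_i o sigma_j^{-1} : V(H_j) -> V(H_i) *)
Definition sigma_ij (n i j : nat) : 'I_(6 * n) -> 'I_(6 * n) :=
  @liftv n (fun a => sigma_nat n i (sigma_inv_nat n j a)).

(* G = (T, e); H = (V1, E1), H' = (V2, E2), sigma : V1 -> V2 an isomorphism.
   Every pair of edges {u,v} in E1, {sigma u, sigma v} in E2 is replaced by
   {u, sigma v}, {sigma u, v}. *)
Definition crossing (T : finType) (e E1 E2 : rel T) (sigma : T -> T) : rel T :=
  fun x y =>
    let removed := [exists u, exists v,
          [&& E1 u v, E2 (sigma u) (sigma v) &
              ((x == u) && (y == v)) || ((x == sigma u) && (y == sigma v))]] in
    let added := [exists u, exists v,
          [&& E1 u v, E2 (sigma u) (sigma v) &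
              ((x == u) && (y == sigma v)) || ((x == sigma u) && (y == v))]] in
    (e x y && ~~ removed) || added.

Local Open Scope ring_scope.
Local Notation R := Rdefinitions.R.

Definition in_hull (k : nat) (P : 'I_k -> R * R) (p : R * R) : Prop :=
  exists w : 'I_k -> R,
    [/\ forall t, 0 <= w t, \sum_(t < k) w t = 1,
        p.1 = \sum_(t < k) w t * (P t).1 & p.2 = \sum_(t < k) w t * (P t).2].

Definition k_polygon_circle (k : nat) (T : finType) (e : rel T) : Prop :=
  exists (c : R * R) (r : R) (P : T -> 'I_k -> R * R),
    [/\ 0 < r,
        forall x, injective (P x),
        forall x t, ((P x t).1 - c.1) ^+ 2 + ((P x t).2 - c.2) ^+ 2 = r ^+ 2
      & forall x y, x != y ->
          (e x y <-> exists p, in_hull (P x) p /\ in_hull (P y) p)].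

Arguments M n : clear implicits.
Arguments H n i : clear implicits.
Arguments sigma_ij n i j : clear implicits.

From mathcomp Require Import all_boot all_order all_algebra.
From mathcomp Require Import ring lra zify.
From mathcomp Require Import Rstruct.
Set Implicit Arguments. Unset Strict Implicit. Unset Printing Implicit Defensive.
Import Order.TTheory GRing.Theory Num.Theory.

(* A k-polygon-circle representation gives every vertex the finite set of
   positions of its corners on the circle.  Two inscribed convex polygons meet
   exactly when their corner sets are not separated by two complementary arcs,
   so after cutting the circle open at a point that is no corner, adjacency
   becomes non-separation of finite sets of reals.
   In sigma^{ij}(M_n) with j < i, the hub v_{4j-2} is adjacent to the three
   pairwise non-adjacent feet v_{4j-3}, v_{5n+j}, v_{4j-1}, and each foot is
   reached from v_{4i-3} by a path avoiding the closed neighbourhoods of the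
   hub and of the two other feet.  The corners along such a path form a set
   around a corner b of v_{4i-3} that is separated from the two other feet
   but not from its own.  Hence every foot contains one of the two corners of
   the feet next to b on the circle, which three pairwise disjoint sets cannot
   do. *)

(** * Separated finite sets on a cut circle *)

Section LineSeparation.
Local Open Scope ring_scope.
Variable R : realDomainType.
Implicit Types (P Q S W X Y : seq R) (x q : R).

(* Both are [0] on [[::]]. *)
Definition lo P : R := \big[Order.min/head 0 P]_(x <- P) x.
Definition hi P : R := \big[Order.max/head 0 P]_(x <- P) x.

Lemma lo_le P x : x \in P -> lo P <= x.
Proof. by move=> xP; rewrite /lo ge_bigmin_seq. Qed.

Lemma le_hi P x : x \in P -> x <= hi P.
Proof. by move=> xP; rewrite /hi le_bigmax_seq. Qed.

Lemma lo_mem P : P != [::] -> lo P \in P.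
Proof.
case: P => // x0 P _; rewrite /lo big_seq.
by elim/big_ind: _ => // [|y z]; [exact: mem_head|rewrite minEle; case: ifP].
Qed.

Lemma hi_mem P : P != [::] -> hi P \in P.
Proof.
case: P => // x0 P _; rewrite /hi big_seq.
by elim/big_ind: _ => // [|y z]; [exact: mem_head|rewrite maxEle; case: ifP].
Qed.

Lemma lo_le_hi P : P != [::] -> lo P <= hi P.
Proof. by move/hi_mem/lo_le. Qed.

Lemma lo_lt_hi_codom k (a : 'I_k -> R) :
  (1 < k)%N -> injective a -> lo (codom a) < hi (codom a).
Proof.
move=> k_gt1 a_inj; pose i0 : 'I_k := Ordinal (ltnW k_gt1); pose i1 := Ordinal k_gt1.
have /eqP a01 : a i0 != a i1 by rewrite (inj_eq a_inj).
have := lo_le (codom_f a i0); have := le_hi (codom_f a i0).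
have := lo_le (codom_f a i1); have := le_hi (codom_f a i1).
by case: ltP => // ? ? ? ? ?; exfalso; apply: a01; lra.
Qed.

Definition outside P q := (q < lo P) || (hi P < q).

(* On the circle cut open at a point outside [P] and [Q], this says that some
   arc contains [P] and the complementary arc contains [Q]. *)
Definition separated P Q := all (outside P) Q || all (outside Q) P.

Lemma separatedC P Q : separated P Q = separated Q P.
Proof. by rewrite /separated orbC. Qed.

Lemma separated_disjoint P Q x : separated P Q -> x \in P -> x \notin Q.
Proof.
move=> sPQ xP; apply/negP => xQ; move: sPQ.
have := lo_le xP; have := le_hi xP; have := lo_le xQ; have := le_hi xQ.
by move=> ? ? ? ? /orP[/allP/(_ x xQ)|/allP/(_ x xP)] /orP[]; lra.
Qed.

Lemma outside_sub P P' q : P' != [::] -> {subset P' <= P} ->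
  outside P q -> outside P' q.
Proof.
move=> P'_neq0 sP'P; have := lo_le (sP'P _ (lo_mem P'_neq0)).
have := le_hi (sP'P _ (hi_mem P'_neq0)).
by rewrite /outside => ? ? /orP[] ?; apply/orP; [left|right]; lra.
Qed.

Lemma separated_sub P Q P' Q' : P' != [::] -> Q' != [::] ->
  {subset P' <= P} -> {subset Q' <= Q} -> separated P Q -> separated P' Q'.
Proof.
move=> P'_neq0 Q'_neq0 sP sQ /orP[/allP hQ|/allP hP]; apply/orP; [left|right];
  apply/allP=> x xP.
- exact: outside_sub P'_neq0 sP (hQ x (sQ x xP)).
- exact: outside_sub Q'_neq0 sQ (hP x (sP x xP)).
Qed.

Lemma not_separated_sub P P' Q : P' != [::] -> Q != [::] -> {subset P' <= P} ->
  ~~ separated P' Q -> ~~ separated P Q.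
Proof. by move=> P'_neq0 Q_neq0 sP; apply: contra; apply: separated_sub. Qed.

Lemma not_separated_witness P Q : ~~ separated P Q ->
  exists2 q, q \in Q & lo P <= q <= hi P.
Proof.
rewrite /separated negb_or -has_predC => /andP[/hasP[q qQ qP] _]; exists q => //.
by move: qP; rewrite /= /outside negb_or -!leNgt => /andP[-> ->].
Qed.

Lemma lo_cat P Q : P != [::] -> Q != [::] -> lo (P ++ Q) = Order.min (lo P) (lo Q).
Proof.
move=> P_neq0 Q_neq0; have PQ_neq0 : P ++ Q != [::] by case: (P) P_neq0.
apply/le_anti; rewrite le_min !lo_le ?mem_cat ?lo_mem ?orbT //=.
by have := lo_mem PQ_neq0; rewrite mem_cat => /orP[] /lo_le; rewrite ge_min => ->; rewrite ?orbT.
Qed.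

Lemma hi_cat P Q : P != [::] -> Q != [::] -> hi (P ++ Q) = Order.max (hi P) (hi Q).
Proof.
move=> P_neq0 Q_neq0; have PQ_neq0 : P ++ Q != [::] by case: (P) P_neq0.
apply/le_anti; rewrite ge_max !le_hi ?mem_cat ?hi_mem ?orbT //=.
by have := hi_mem PQ_neq0; rewrite mem_cat => /orP[] /le_hi; rewrite le_max => ->; rewrite ?orbT.
Qed.

Lemma all_outside_swap P S q : P != [::] -> S != [::] ->
  all (outside P) S -> lo P <= q <= hi P -> outside S q -> all (outside S) P.
Proof.
move=> P_neq0 S_neq0 /allP PS /andP[q1 q2] Sq.
have := PS _ (lo_mem S_neq0); have := PS _ (hi_mem S_neq0).
have := lo_le_hi S_neq0; have := lo_le_hi P_neq0.
move: Sq; rewrite /outside => /orP[] ? ? ? /orP[] ? /orP[] ?;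
  apply/allP => p pP; have := lo_le pP; have := le_hi pP; move=> ? ?;
  apply/orP; lra.
Qed.

(* The hulls of [P] and [Q] overlap, so their union is again an interval. *)
Lemma separated_cat P Q S : P != [::] -> Q != [::] -> S != [::] ->
  ~~ separated P Q -> separated P S -> separated Q S -> separated (P ++ Q) S.
Proof.
move=> P_neq0 Q_neq0 S_neq0 nPQ.
have [q qQ qP] := not_separated_witness nPQ.
have [p pP pQ] : exists2 p, p \in P & lo Q <= p <= hi Q.
  by apply: not_separated_witness; rewrite separatedC.
move=> /orP[SP|PS] /orP[SQ|QS]; apply/orP.
- left; apply/allP => s sS; move: (allP SP s sS) (allP SQ s sS) qP pQ.
  have := le_hi pP; have := lo_le pP; have := le_hi qQ; have := lo_le qQ.
  rewrite /outside lo_cat // hi_cat // lt_min gt_max.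
  by move=> ? ? ? ? /orP[] ? /orP[] ? /andP[? ?] /andP[? ?]; apply/orP; lra.
- right; rewrite all_cat QS andbT.
  exact: all_outside_swap P_neq0 S_neq0 SP qP (allP QS q qQ).
- right; rewrite all_cat PS.
  exact: all_outside_swap Q_neq0 S_neq0 SQ pQ (allP PS p pP).
- by right; rewrite all_cat PS QS.
Qed.

Lemma separated_cat_bridge Z X1 A X2 :
  X1 != [::] -> A != [::] -> X2 != [::] -> Z != [::] ->
  ~~ separated X1 A -> ~~ separated A X2 ->
  separated X1 Z -> separated A Z -> separated X2 Z -> separated (X1 ++ X2) Z.
Proof.
move=> X1_neq0 A_neq0 X2_neq0 Z_neq0 nX1A nAX2 sX1 sA sX2.
have X1A_neq0 : X1 ++ A != [::] by case: (X1) X1_neq0.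
have sX1A : separated (X1 ++ A) Z by exact: separated_cat.
have nX1AX2 : ~~ separated (X1 ++ A) X2.
  by apply: not_separated_sub nAX2 => // x xA; rewrite mem_cat xA orbT.
apply: separated_sub (separated_cat X1A_neq0 X2_neq0 Z_neq0 nX1AX2 sX1A sX2) => //.
- by case: (X1) X1_neq0.
- by move=> x; rewrite !mem_cat => /orP[->|->]; rewrite ?orbT.
Qed.

(* [e1] and [e2] are the points of [X] next to [b] on either side, the line
   being closed up into a circle: either [b] lies in a gap [(e1, e2)] of [X],
   or [e1] and [e2] are the extreme points of [X] and [b] lies beyond them. *)
Definition circle_neighbours X (b e1 e2 : R) :=
  ((e1 < b < e2) /\ forall x, x \in X -> x <= e1 \/ e2 <= x) \/
  ((forall x, x \in X -> e1 <= x <= e2) /\ (b < e1 \/ e2 < b)).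

Lemma exists_circle_neighbours X b : X != [::] -> b \notin X ->
  exists e1 e2, [/\ e1 \in X, e2 \in X & circle_neighbours X b e1 e2].
Proof.
move=> X_neq0 bX.
have X_lt_gt x : x \in X -> x < b \/ b < x.
  by move=> xX; case: ltgtP; auto => xb; move: bX; rewrite -xb xX.
have X_hull x : x \in X -> lo X <= x <= hi X by move=> xX; rewrite lo_le ?le_hi.
set L := [seq x <- X | x < b]; set U := [seq x <- X | b < x].
have [L0|L_neq0] := eqVneq L [::].
  exists (lo X), (hi X); split; rewrite ?lo_mem ?hi_mem //; right; split => //.
  left; case: (X_lt_gt _ (lo_mem X_neq0)) => // loX.
  by have := mem_filter (fun x => x < b) (lo X) X; rewrite -/L L0 /= (lo_mem X_neq0) loX.
have [U0|U_neq0] := eqVneq U [::].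
  exists (lo X), (hi X); split; rewrite ?lo_mem ?hi_mem //; right; split => //.
  right; case: (X_lt_gt _ (hi_mem X_neq0)) => // hiX.
  by have := mem_filter (fun x => b < x) (hi X) X; rewrite -/U U0 /= (hi_mem X_neq0) hiX.
have := hi_mem L_neq0; rewrite mem_filter => /andP[hib hiX].
have := lo_mem U_neq0; rewrite mem_filter => /andP[lob loX].
exists (hi L), (lo U); split => //; left; split; first by rewrite hib.
move=> x xX; case: (X_lt_gt x xX) => xb; [left|right].
- by apply: le_hi; rewrite mem_filter xb.
- by apply: lo_le; rewrite mem_filter xb.
Qed.

(* A set [W] around [b] that is separated from both neighbours of [b] stays
   inside the gap between them, so it is separated from every part of [X]
   avoiding the neighbours. *)
Lemma separated_circle_neighbours X Y S W b e1 e2 :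
  circle_neighbours X b e1 e2 -> e1 \in S -> e2 \in S -> b \in W ->
  {subset Y <= X} -> Y != [::] -> e1 \notin Y -> e2 \notin Y ->
  separated W S -> separated W Y.
Proof.
move=> nbrs e1S e2S bW sYX Y_neq0 e1Y e2Y.
have neq_e y : y \in Y -> y != e1 /\ y != e2.
  by move=> yY; split; [apply: contraNneq _ e1Y|apply: contraNneq _ e2Y] => <-.
have := lo_le bW; have := le_hi bW; have := lo_le e1S; have := le_hi e2S.
have loY := lo_mem Y_neq0; have hiY := hi_mem Y_neq0.
move=> ? ? ? ? /orP[/allP SW | /allP WS]; apply/orP;
  case: nbrs => [[/andP[? ?] gap]|[hull ?]].
- have gapY y : y \in Y -> y < e1 \/ e2 < y.
    move=> yY; have [ne1 ne2] := neq_e y yY.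
    by case: (gap y (sYX y yY)) => ?; [left|right]; rewrite lt_neqAle ?ne1 // eq_sym ne2.
  move: (SW _ e1S) (SW _ e2S); rewrite /outside => /orP[] ? /orP[] ?; try lra.
  left; apply/allP => y yY; rewrite /outside.
  by case: (gapY y yY) => ?; apply/orP; [left|right]; lra.
- have hullY y : y \in Y -> e1 < y < e2.
    move=> yY; have [ne1 ne2] := neq_e y yY; have /andP[? ?] := hull y (sYX y yY).
    by rewrite !lt_neqAle eq_sym ne1 ne2 /=; apply/andP.
  left; apply/allP => y yY; have /andP[? ?] := hullY y yY.
  by move: (SW _ e1S) (SW _ e2S); rewrite /outside => /orP[] ? /orP[] ?; apply/orP; lra.
- by move: (WS _ bW); rewrite /outside => /orP[] ?; lra.
- have := hull _ (sYX _ loY); have := hull _ (sYX _ hiY).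
  have [lo1 _] := neq_e _ loY; have [_ hi2] := neq_e _ hiY.
  move=> /andP[_ ?] /andP[? _].
  have ? : e1 < lo Y by rewrite lt_neqAle eq_sym lo1.
  have ? : hi Y < e2 by rewrite lt_neqAle hi2.
  right; apply/allP => w wW; move: (WS w wW); rewrite /outside.
  by have := lo_le wW; have := le_hi wW; move=> ? ? /orP[] ?; apply/orP; lra.
Qed.

(* Each [Xt] must contain one of the two circle neighbours of [b] in the
   union [X1 ++ X2 ++ X3], which three pairwise disjoint sets cannot do. *)
Lemma no_three_rails X1 X2 X3 W1 W2 W3 b :
  X1 != [::] -> X2 != [::] -> X3 != [::] ->
  separated X1 X2 -> separated X1 X3 -> separated X2 X3 ->
  b \in W1 -> b \in W2 -> b \in W3 ->
  separated W1 (X2 ++ X3) -> separated W2 (X1 ++ X3) -> separated W3 (X1 ++ X2) ->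
  ~~ separated W1 X1 -> ~~ separated W2 X2 -> ~~ separated W3 X3 -> False.
Proof.
move=> X1_neq0 X2_neq0 X3_neq0 s12 s13 s23 bW1 bW2 bW3 sW1 sW2 sW3 nW1 nW2 nW3.
set X := X1 ++ X2 ++ X3.
have X_neq0 : X != [::] by rewrite /X; case: (X1) X1_neq0.
have bX : b \notin X.
  rewrite /X !mem_cat; apply/negP => /or3P[bX|bX|bX].
  - by have := separated_disjoint sW2 bW2; rewrite mem_cat bX.
  - by have := separated_disjoint sW1 bW1; rewrite mem_cat bX.
  - by have := separated_disjoint sW1 bW1; rewrite mem_cat bX orbT.
have [e1 [e2 [e1X e2X nbrs]]] := exists_circle_neighbours X_neq0 bX.
have touch Y S W : {subset Y <= X} -> Y != [::] ->
    (forall e, e \in X -> e \notin Y -> e \in S) -> b \in W ->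
    separated W S -> ~~ separated W Y -> (e1 \in Y) || (e2 \in Y).
  move=> sYX Y_neq0 XYS bW sWS; apply: contraR => /norP[e1Y e2Y].
  exact: separated_circle_neighbours nbrs (XYS _ e1X e1Y) (XYS _ e2X e2Y) bW
    sYX Y_neq0 e1Y e2Y sWS.
have sub1 : {subset X1 <= X} by move=> x xX; rewrite /X mem_cat xX.
have sub2 : {subset X2 <= X} by move=> x xX; rewrite /X !mem_cat xX orbT.
have sub3 : {subset X3 <= X} by move=> x xX; rewrite /X !mem_cat xX !orbT.
have parts e : e \in X -> [&& (e \notin X1) ==> (e \in X2 ++ X3),
    (e \notin X2) ==> (e \in X1 ++ X3) & (e \notin X3) ==> (e \in X1 ++ X2)].
  by rewrite /X !mem_cat; case: (e \in X1); case: (e \in X2); case: (e \in X3).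
have t1 : (e1 \in X1) || (e2 \in X1).
  by apply: touch sub1 X1_neq0 _ bW1 sW1 nW1 => e /parts/and3P[/implyP].
have t2 : (e1 \in X2) || (e2 \in X2).
  by apply: touch sub2 X2_neq0 _ bW2 sW2 nW2 => e /parts/and3P[_ /implyP].
have t3 : (e1 \in X3) || (e2 \in X3).
  by apply: touch sub3 X3_neq0 _ bW3 sW3 nW3 => e /parts/and3P[_ _ /implyP].
have d12 := separated_disjoint s12; have d13 := separated_disjoint s13.
have d23 := separated_disjoint s23.
case/orP: t1 => a; case/orP: t2 => c; case/orP: t3 => d;
  by [rewrite (negPf (d12 _ a)) in c|rewrite (negPf (d13 _ a)) in d
     |rewrite (negPf (d23 _ c)) in d].
Qed.
End LineSeparation.

Section SeparationModel.
Local Open Scope ring_scope.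
Variables (R : realDomainType) (T : eqType) (e : rel T) (f : T -> seq R).
Hypothesis f_neq0 : forall x, f x != [::].
Hypothesis f_model : forall x y, x != y -> e x y = ~~ separated (f x) (f y).

Definition adjacent x y := (x != y) && e x y.
Definition far x y := (x != y) && ~~ e x y.

Lemma edge_not_separated x y : e x y -> ~~ separated (f x) (f y).
Proof.
case: (eqVneq x y) => [<-|xy]; last by rewrite f_model.
move=> _; apply/negP => /separated_disjoint sxx.
by have := sxx _ (lo_mem (f_neq0 x)); rewrite lo_mem.
Qed.

Lemma far_separated x y : far x y -> separated (f x) (f y).
Proof. by case/andP => xy; rewrite f_model // negbK. Qed.

Lemma separated_path h w S : S != [::] -> path e h w ->
  all (fun y => separated (f y) S) (h :: w) -> separated (flatten (map f (h :: w))) S.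
Proof.
move=> S_neq0; elim: w h => [|h' w IHw] h /=; first by rewrite cats0 andbT.
move=> /andP[ehh' hw] /andP[hS h'wS].
apply: separated_cat => //; last exact: IHw.
  by have := f_neq0 h'; case: (f h').
rewrite separatedC; apply: (not_separated_sub (P' := f h')) => //.
- by move=> x xh'; rewrite mem_cat xh'.
- by rewrite separatedC edge_not_separated.
Qed.

Definition rail (a x x' xt b h : T) (w : seq T) :=
  [&& path e h w, b \in h :: w,
      all (fun y => [&& far y a, far y x & far y x']) (h :: w)
    & has (adjacent^~ xt) (h :: w)].

Lemma rail_separated a x x' xt b h w : e a x -> e a x' -> rail a x x' xt b h w ->
  let W := flatten (map f (h :: w)) in
  [/\ {subset f b <= W}, separated W (f x ++ f x') & ~~ separated W (f xt)].
Proof.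
move=> eax eax' /and4P[hw bW farW /hasP[t tW /andP[txt ett]]] W.
have sub y : y \in h :: w -> {subset f y <= W}.
  by move=> yW p py; apply/flattenP; exists (f y); rewrite ?map_f.
split; [exact: sub| |].
  apply: separated_path => //; first by have := f_neq0 x; case: (f x).
  apply/allP => y yW; have /and3P[ya yx yx'] := allP farW y yW.
  rewrite separatedC; apply: (separated_cat_bridge (A := f a)); rewrite ?f_neq0 //.
  - by rewrite separatedC edge_not_separated.
  - exact: edge_not_separated.
  - by rewrite separatedC; apply: far_separated.
  - by rewrite separatedC; apply: far_separated.
  - by rewrite separatedC; apply: far_separated.
apply: (not_separated_sub (P' := f t)) => //; first exact: sub.
exact: edge_not_separated.
Qed.

Lemma no_three_rails_model a b x1 x2 x3 h1 w1 h2 w2 h3 w3 :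
  e a x1 -> e a x2 -> e a x3 -> far x1 x2 -> far x1 x3 -> far x2 x3 ->
  rail a x2 x3 x1 b h1 w1 -> rail a x1 x3 x2 b h2 w2 -> rail a x1 x2 x3 b h3 w3 ->
  False.
Proof.
move=> ea1 ea2 ea3 f12 f13 f23 r1 r2 r3.
have [b1 s1 n1] := rail_separated ea2 ea3 r1.
have [b2 s2 n2] := rail_separated ea1 ea3 r2.
have [b3 s3 n3] := rail_separated ea1 ea2 r3.
have pb := lo_mem (f_neq0 b).
exact: no_three_rails (f_neq0 _) (f_neq0 _) (f_neq0 _) (far_separated f12)
  (far_separated f13) (far_separated f23) (b1 _ pb) (b2 _ pb) (b3 _ pb) s1 s2 s3 n1 n2 n3.
Qed.
End SeparationModel.

(** * Inscribed convex polygons *)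

Local Notation R := Rdefinitions.R.

Section InscribedPolygons.
Local Open Scope ring_scope.
Implicit Types (c u p q w z : R * R) (r s x y : R).

Definition orient p q w : R :=
  (q.1 - p.1) * (w.2 - p.2) - (q.2 - p.2) * (w.1 - p.1).

Definition cyc s x y : R := (s - x) * (x - y) * (y - s).

Lemma cyc_gt0 s x y : s < x -> x < y -> 0 < cyc s x y.
Proof.
move=> sx xy; have -> : cyc s x y = (x - s) * (y - x) * (y - s) by rewrite /cyc; ring.
by rewrite !mulr_gt0 // subr_gt0 //; apply: lt_trans xy.
Qed.

Lemma cyc_ge0 s x y : s <= x -> x <= y -> 0 <= cyc s x y.
Proof.
move=> sx xy; have -> : cyc s x y = (x - s) * (y - x) * (y - s) by rewrite /cyc; ring.
by rewrite !mulr_ge0 // subr_ge0 //; apply: le_trans xy.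
Qed.

Lemma cyc_lt0 s x y : s < y -> (x < s) || (y < x) -> cyc s x y < 0.
Proof.
move=> sy /orP[] xsy; rewrite /cyc.
- have -> : (s - x) * (x - y) * (y - s) = - ((s - x) * (y - x) * (y - s)) by ring.
  by rewrite oppr_lt0 !mulr_gt0 // subr_gt0 //; apply: lt_trans sy.
- have -> : (s - x) * (x - y) * (y - s) = - ((x - s) * (x - y) * (y - s)) by ring.
  by rewrite oppr_lt0 !mulr_gt0 // subr_gt0 //; apply: lt_trans xsy.
Qed.

Lemma sqrD1_gt0 x : 0 < x ^+ 2 + 1.
Proof. by have := sqr_ge0 x; lra. Qed.

Lemma sqrD1_neq0 x : x ^+ 2 + 1 != 0.
Proof. by rewrite gt_eqF ?sqrD1_gt0. Qed.

(* Inverse stereographic projection of the real line onto the unit circle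
   from the point [(1, 0)]. *)
Definition stereo_x x := (x ^+ 2 - 1) / (x ^+ 2 + 1).
Definition stereo_y x := 2 * x / (x ^+ 2 + 1).

Lemma stereo_unit x : stereo_x x ^+ 2 + stereo_y x ^+ 2 = 1.
Proof. by rewrite /stereo_x /stereo_y; field; apply: sqrD1_neq0. Qed.

Lemma stereo_x_nat_inj : injective (fun m : nat => stereo_x m%:R).
Proof.
have sx y : stereo_x y = 1 - 2 * (y ^+ 2 + 1)^-1.
  by rewrite /stereo_x; field; apply: sqrD1_neq0.
move=> m m'; rewrite /= !sx => e.
have /invr_inj e2 : ((m%:R : R) ^+ 2 + 1)^-1 = (m'%:R ^+ 2 + 1)^-1 by lra.
have : (m%:R : R) ^+ 2 = m'%:R ^+ 2 by lra.
by rewrite -!natrX => /eqP; rewrite eqr_nat eqn_exp2r // => /eqP.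
Qed.

(* The circle of center [c] and radius [r], parametrized through the
   rotation sending [(1, 0)] to the unit vector [u]: the pole [c + r u] is
   the only point of the circle it misses. *)
Definition circ c u r x : R * R :=
  (c.1 + r * (stereo_x x * u.1 - stereo_y x * u.2),
   c.2 + r * (stereo_x x * u.2 + stereo_y x * u.1)).

Lemma orient_circ c u r s y x : u.1 ^+ 2 + u.2 ^+ 2 = 1 ->
  orient (circ c u r s) (circ c u r y) (circ c u r x) =
  4 * r ^+ 2 / ((s ^+ 2 + 1) * (y ^+ 2 + 1) * (x ^+ 2 + 1)) * cyc s x y.
Proof.
move=> u1; have -> : 4 * r ^+ 2 = 4 * r ^+ 2 * (u.1 ^+ 2 + u.2 ^+ 2) by rewrite u1 mulr1.
rewrite /orient /circ /stereo_x /stereo_y /cyc /=.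
have := sqrD1_neq0 s; have := sqrD1_neq0 y; have := sqrD1_neq0 x.
by move=> x0 y0 s0; field; rewrite s0 y0 x0.
Qed.

Lemma orient_circ_sign c u r s y x : 0 < r -> u.1 ^+ 2 + u.2 ^+ 2 = 1 ->
  exists2 K, 0 < K & orient (circ c u r s) (circ c u r y) (circ c u r x) = K * cyc s x y.
Proof.
move=> r0 u1; rewrite orient_circ //; eexists; last reflexivity.
by rewrite divr_gt0 ?mulr_gt0 ?exprn_gt0 ?sqrD1_gt0.
Qed.

Lemma stereo_proj (a b : R) : a != 1 -> a ^+ 2 + b ^+ 2 = 1 ->
  stereo_x (b / (1 - a)) = a /\ stereo_y (b / (1 - a)) = b.
Proof.
move=> a1 ab1; have a1' : 1 - a != 0 by rewrite subr_eq0 eq_sym.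
have b2 : b ^+ 2 = 1 - a ^+ 2 by lra.
have den : (b / (1 - a)) ^+ 2 + 1 = 2 / (1 - a).
  by rewrite expr_div_n b2; field.
have num : (b / (1 - a)) ^+ 2 - 1 = 2 * a / (1 - a).
  by rewrite expr_div_n b2; field.
by rewrite /stereo_x /stereo_y den num; split; field.
Qed.

(* Stereographic projection from the pole [c + r u]. *)
Definition circ_param c u r p : R :=
  let v1 := (p.1 - c.1) / r in let v2 := (p.2 - c.2) / r in
  (u.1 * v2 - u.2 * v1) / (1 - (v1 * u.1 + v2 * u.2)).

Lemma circ_paramK c u r p : 0 < r -> u.1 ^+ 2 + u.2 ^+ 2 = 1 ->
  (p.1 - c.1) ^+ 2 + (p.2 - c.2) ^+ 2 = r ^+ 2 ->
  p != (c.1 + r * u.1, c.2 + r * u.2) -> p = circ c u r (circ_param c u r p).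
Proof.
move=> r0 u1 pc p_pole; have r0' : r != 0 by rewrite gt_eqF.
set v1 := (p.1 - c.1) / r; set v2 := (p.2 - c.2) / r.
have v1v2 : v1 ^+ 2 + v2 ^+ 2 = 1.
  by rewrite /v1 /v2 !expr_div_n -mulrDl pc divff // expf_neq0.
set a := v1 * u.1 + v2 * u.2; set b := u.1 * v2 - u.2 * v1.
have ab1 : a ^+ 2 + b ^+ 2 = 1.
  have -> : a ^+ 2 + b ^+ 2 = (v1 ^+ 2 + v2 ^+ 2) * (u.1 ^+ 2 + u.2 ^+ 2).
    by rewrite /a /b; ring.
  by rewrite v1v2 u1 mulr1.
have a1 : a != 1.
  apply: contra_neq p_pole => a1.
  have : (v1 - u.1) ^+ 2 + (v2 - u.2) ^+ 2 = 0.
    have -> : (v1 - u.1) ^+ 2 + (v2 - u.2) ^+ 2 =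
      (v1 ^+ 2 + v2 ^+ 2) + (u.1 ^+ 2 + u.2 ^+ 2) - 2 * a by rewrite /a; ring.
    by rewrite v1v2 u1 a1; ring.
  move/eqP; rewrite paddr_eq0 ?sqr_ge0 // !sqrf_eq0 !subr_eq0 => /andP[/eqP<- /eqP<-].
  by rewrite /v1 /v2; case: (p) => p1 p2 /=; congr (_, _); field.
rewrite /circ_param -/v1 -/v2 -/a -/b /circ; have [-> ->] := stereo_proj a1 ab1.
have -> : a * u.1 - b * u.2 = v1 * (u.1 ^+ 2 + u.2 ^+ 2) by rewrite /a /b; ring.
have -> : a * u.2 + b * u.1 = v2 * (u.1 ^+ 2 + u.2 ^+ 2) by rewrite /a /b; ring.
rewrite u1 !mulr1 /v1 /v2.
by case: p {pc p_pole v1 v2 v1v2 a b ab1 a1} => p1 p2 /=; congr (_, _); field.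
Qed.

(* Among [#|T * 'I_k| + 1] distinct candidate poles one is not a vertex. *)
Lemma exists_pole (T : finType) k (P : T -> 'I_k -> R * R) c r : 0 < r ->
  exists u, u.1 ^+ 2 + u.2 ^+ 2 = 1 /\
    forall v t, P v t != (c.1 + r * u.1, c.2 + r * u.2).
Proof.
move=> r_gt0; pose dir (m : nat) := (stereo_x m%:R, stereo_y m%:R).
pose pole m := (c.1 + r * (dir m).1, c.2 + r * (dir m).2).
suff /existsP[m /forallP free] : [exists m : 'I_#|{: T * 'I_k}|.+1,
    [forall xt : T * 'I_k, P xt.1 xt.2 != pole m]].
  by exists (dir m); split => [|v t]; [exact: stereo_unit|exact: (free (v, t))].
apply: contraT => /existsPn hit.
have hitP (m : 'I_#|{: T * 'I_k}|.+1) : exists xt : T * 'I_k, P xt.1 xt.2 == pole m.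
  by have := hit m; rewrite negb_forall => /existsP[xt]; rewrite negbK; exists xt.
pose g m := xchoose (hitP m).
suff /leq_card : injective g by rewrite card_ord ltnn.
move=> m m' gm; apply/val_inj/stereo_x_nat_inj.
have /eqP := xchooseP (hitP m); rewrite -/(g m) gm (eqP (xchooseP (hitP m'))).
by move=> [/addrI/(mulfI (lt0r_neq0 r_gt0))].
Qed.

Lemma in_hull_orient k (A : 'I_k -> R * R) z p q : in_hull A z ->
  exists2 l : 'I_k -> R, (forall i, 0 <= l i) /\ \sum_(i < k) l i = 1 &
    orient p q z = \sum_(i < k) l i * orient p q (A i).
Proof.
case=> l [l0 l1 z1 z2]; exists l => //.
have -> : \sum_(i < k) l i * orient p q (A i) =
    (q.1 - p.1) * (\sum_(i < k) l i * (A i).2 - p.2 * \sum_(i < k) l i)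
  - (q.2 - p.2) * (\sum_(i < k) l i * (A i).1 - p.1 * \sum_(i < k) l i).
  rewrite !mulr_sumr -!sumrB !mulr_sumr -sumrB; apply: eq_bigr => i _.
  by rewrite /orient; ring.
by rewrite l1 !mulr1 -z1 -z2.
Qed.

Lemma in_hull_orient_ge0 k (A : 'I_k -> R * R) z p q : in_hull A z ->
  (forall i, 0 <= orient p q (A i)) -> 0 <= orient p q z.
Proof.
move=> /(in_hull_orient p q)[l [l0 _] ->] A0.
by apply: sumr_ge0 => i _; apply: mulr_ge0.
Qed.

Lemma in_hull_orient_lt0 k (A : 'I_k -> R * R) z p q : in_hull A z ->
  (forall i, orient p q (A i) < 0) -> orient p q z < 0.
Proof.
move=> /(in_hull_orient p q)[l [l0 l1] ->] A0.
have [t0 /andP[_ lt0]] : exists i, true && (0 < l i).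
  by apply/psumr_neq0P => //; rewrite l1; apply/eqP; rewrite oner_eq0.
rewrite (bigD1 t0) //=.
have : \sum_(i < k | i != t0) l i * orient p q (A i) <= 0.
  by apply: sumr_le0 => i _; rewrite mulr_ge0_le0 // ltW.
have : l t0 * orient p q (A t0) < 0 by rewrite pmulr_rlt0.
lra.
Qed.

Lemma sum_delta k (i : 'I_k) (F : 'I_k -> R) :
  \sum_(j < k) (j == i)%:R * F j = F i.
Proof.
rewrite (bigD1 i) //= eqxx mul1r big1 ?addr0 // => j ji.
by rewrite (negPf ji) mul0r.
Qed.

Lemma sum_delta2 k (i j : 'I_k) (a b : R) (F : 'I_k -> R) :
  \sum_(m < k) (a * (m == i)%:R + b * (m == j)%:R) * F m = a * F i + b * F j.
Proof.
rewrite (eq_bigr (fun m => a * ((m == i)%:R * F m) + b * ((m == j)%:R * F m))).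
  by rewrite big_split -!mulr_sumr !sum_delta.
by move=> m _; ring.
Qed.

Lemma in_hull_segment k (A : 'I_k -> R * R) i j l : i != j -> 0 <= l <= 1 ->
  in_hull A ((1 - l) * (A i).1 + l * (A j).1, (1 - l) * (A i).2 + l * (A j).2).
Proof.
move=> ij /andP[l0 l1].
exists (fun m => (1 - l) * (m == i)%:R + l * (m == j)%:R); split.
- by move=> m; apply: addr_ge0; apply: mulr_ge0 => //; lra.
- rewrite (eq_bigr (fun m => ((1 - l) * (m == i)%:R + l * (m == j)%:R) * 1)).
    by rewrite sum_delta2; ring.
  by move=> m _; rewrite mulr1.
all: by rewrite sum_delta2.
Qed.

Lemma in_hull_vertex k (A : 'I_k -> R * R) i : in_hull A (A i).
Proof.
exists (fun m => (m == i)%:R); split => //.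
- rewrite (eq_bigr (fun m => (m == i)%:R * 1)) ?sum_delta // => m _.
  by rewrite mulr1.
- by rewrite sum_delta.
- by rewrite sum_delta.
Qed.

Lemma in_hull_const k (A : 'I_k -> R * R) i z :
  (forall j, A j = A i) -> in_hull A z -> z = A i.
Proof.
move=> Ai [l [_ l1 z1 z2]].
have sum_const (g : R * R -> R) : \sum_(j < k) l j * g (A j) = g (A i).
  by rewrite (eq_bigr (fun j => l j * g (A i))) => [|j _]; rewrite ?Ai // -mulr_suml l1 mul1r.
by rewrite [z]surjective_pairing z1 z2 (sum_const fst) (sum_const snd) -surjective_pairing.
Qed.

Lemma segments_meet (a a' b b' : R * R) :
  orient b b' a - orient b b' a' != 0 -> orient a a' b - orient a a' b' != 0 ->
  let l := orient b b' a / (orient b b' a - orient b b' a') in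
  let m := orient a a' b / (orient a a' b - orient a a' b') in
  (1 - l) * a.1 + l * a'.1 = (1 - m) * b.1 + m * b'.1 /\
  (1 - l) * a.2 + l * a'.2 = (1 - m) * b.2 + m * b'.2.
Proof.
case: a a' b b' => [a1 a2] [a1' a2'] [b1 b2] [b1' b2'].
by rewrite /orient /= => h1 h2; split; field; rewrite h1 h2.
Qed.

Lemma ratio_in01 (x y : R) : x < 0 < y \/ y < 0 < x -> 0 <= x / (x - y) <= 1.
Proof.
case=> /andP[? ?]; last by rewrite divr_ge0 ?ler_pdivrMr; lra.
by rewrite -[x / _]divrNN divr_ge0 ?ler_pdivrMr ?oppr_gt0; lra.
Qed.

Section OnCircle.
Variables (c u : R * R) (r : R).
Hypotheses (r_gt0 : 0 < r) (u1 : u.1 ^+ 2 + u.2 ^+ 2 = 1).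

Lemma circK : cancel (circ c u r) (circ_param c u r).
Proof.
move=> x; have r0 : r != 0 by rewrite gt_eqF.
set X := stereo_x x; set Y := stereo_y x.
have -> : circ_param c u r (circ c u r x) = (Y * (u.1 ^+ 2 + u.2 ^+ 2)) / (1 - X * (u.1 ^+ 2 + u.2 ^+ 2)).
  by rewrite /circ_param /circ /= -/X -/Y; congr (_ / (1 - _)); field.
have x0 := sqrD1_neq0 x.
have X1 : 1 - X = 2 / (x ^+ 2 + 1) by rewrite /X /stereo_x; field.
by rewrite u1 !mulr1 X1 /Y /stereo_y; field; rewrite x0.
Qed.

Lemma circ_inj : injective (circ c u r).
Proof. exact: can_inj circK. Qed.

(* Two chords whose endpoints alternate around the circle cross. *)
Lemma interleaved_hulls_meet k (A B : 'I_k -> R * R) (a b : 'I_k -> R) i i' j j' :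
  (forall t, A t = circ c u r (a t)) -> (forall t, B t = circ c u r (b t)) ->
  a i < b j -> b j < a i' -> a i' < b j' ->
  exists z, in_hull A z /\ in_hull B z.
Proof.
move=> Aa Bb o1 o2 o3.
have ii' : i != i' by apply: contraTneq o2 => <-; rewrite -leNgt ltW.
have jj' : j != j' by apply: contraTneq o3 => <-; rewrite -leNgt ltW.
have [K1 K1_gt0 eA] := orient_circ_sign c (b j) (b j') (a i) r_gt0 u1.
have [K2 K2_gt0 eA'] := orient_circ_sign c (b j) (b j') (a i') r_gt0 u1.
have [K3 K3_gt0 eB] := orient_circ_sign c (a i) (a i') (b j) r_gt0 u1.
have [K4 K4_gt0 eB'] := orient_circ_sign c (a i) (a i') (b j') r_gt0 u1.
rewrite -!Aa -!Bb in eA eA' eB eB'.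
have sA : orient (B j) (B j') (A i) < 0.
  by rewrite eA pmulr_rlt0 // cyc_lt0 ?o1 //; lra.
have sA' : 0 < orient (B j) (B j') (A i') by rewrite eA' pmulr_rgt0 // cyc_gt0.
have sB : 0 < orient (A i) (A i') (B j) by rewrite eB pmulr_rgt0 // cyc_gt0.
have sB' : orient (A i) (A i') (B j') < 0.
  by rewrite eB' pmulr_rlt0 // cyc_lt0 ?o3 ?orbT //; lra.
have dA : orient (B j) (B j') (A i) - orient (B j) (B j') (A i') != 0 by rewrite lt_eqF ?subr_lt0 //; lra.
have dB : orient (A i) (A i') (B j) - orient (A i) (A i') (B j') != 0 by rewrite gt_eqF ?subr_gt0 //; lra.
have [z1 z2] := segments_meet dA dB.
set l := _ / _ in z1 z2; set m := _ / _ in z1 z2.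
exists ((1 - l) * (A i).1 + l * (A i').1, (1 - l) * (A i).2 + l * (A i').2); split.
  by apply: in_hull_segment ii' _; apply: ratio_in01; rewrite sA sA'; left.
by rewrite z1 z2; apply: in_hull_segment jj' _; apply: ratio_in01; rewrite sB sB'; right.
Qed.

Lemma separated_hulls_disjoint k (A B : 'I_k -> R * R) (a b : 'I_k -> R) z :
  (forall t, A t = circ c u r (a t)) -> (forall t, B t = circ c u r (b t)) ->
  lo (codom a) < hi (codom a) -> all (outside (codom a)) (codom b) ->
  in_hull A z -> in_hull B z -> False.
Proof.
move=> Aa Bb lo_hi /allP b_out zA zB.
set s := lo (codom a); set t := hi (codom a).
have : 0 <= orient (circ c u r s) (circ c u r t) z.
  apply: in_hull_orient_ge0 zA _ => i; rewrite Aa.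
  have [K K_gt0 ->] := orient_circ_sign c s t (a i) r_gt0 u1.
  by apply: mulr_ge0; [exact: ltW|apply: cyc_ge0; rewrite (lo_le, le_hi) // codom_f].
have : orient (circ c u r s) (circ c u r t) z < 0.
  apply: in_hull_orient_lt0 zB _ => i; rewrite Bb.
  have [K K_gt0 ->] := orient_circ_sign c s t (b i) r_gt0 u1.
  by rewrite pmulr_rlt0 //; apply: cyc_lt0 (b_out _ (codom_f b i)).
lra.
Qed.

Lemma not_separated_hulls_meet k (A B : 'I_k -> R * R) (a b : 'I_k -> R) :
  (forall t, A t = circ c u r (a t)) -> (forall t, B t = circ c u r (b t)) ->
  (0 < k)%N -> ~~ separated (codom a) (codom b) -> exists z, in_hull A z /\ in_hull B z.
Proof.
move=> Aa Bb k_gt0 nab.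
have a_neq0 : codom a != [::] by rewrite -size_eq0 size_codom card_ord -lt0n.
have b_neq0 : codom b != [::] by rewrite -size_eq0 size_codom card_ord -lt0n.
have [_ /codomP[j ->] /andP[bj1 bj2]] := not_separated_witness nab.
have [_ /codomP[i ->] /andP[ai1 ai2]] :
    exists2 x, x \in codom a & lo (codom b) <= x <= hi (codom b).
  by apply: not_separated_witness; rewrite separatedC.
have /codomP[i1 lo_a] := lo_mem a_neq0; have /codomP[i2 hi_a] := hi_mem a_neq0.
have /codomP[j1 lo_b] := lo_mem b_neq0; have /codomP[j2 hi_b] := hi_mem b_neq0.
rewrite lo_a hi_a in bj1 bj2; rewrite lo_b hi_b in ai1 ai2.
have shared i' j' : a i' = b j' -> exists z, in_hull A z /\ in_hull B z.
  by move=> ab; exists (A i'); rewrite {2}Aa ab -Bb; split; apply: in_hull_vertex.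
have [h1|?|/shared//] := ltgtP (a i1) (b j); last by lra.
have [h2|?|/esym/shared//] := ltgtP (b j) (a i2); last by lra.
have [h3|?|/esym/shared//] := ltgtP (b j1) (a i); last by lra.
have [h4|?|/shared//] := ltgtP (a i) (b j2); last by lra.
have [h5|h5|/shared//] := ltgtP (a i1) (b j1).
  exact: interleaved_hulls_meet Aa Bb h5 h3 h4.
by have [z []] := interleaved_hulls_meet Bb Aa h5 h1 h2; exists z.
Qed.

Lemma hulls_meet_not_separated k (A B : 'I_k -> R * R) (a b : 'I_k -> R) z :
  (forall t, A t = circ c u r (a t)) -> (forall t, B t = circ c u r (b t)) ->
  (0 < k)%N -> injective A -> injective B -> in_hull A z -> in_hull B z ->
  ~~ separated (codom a) (codom b).
Proof.
move=> Aa Bb k_gt0 A_inj B_inj zA zB; apply/negP => sep.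
have inj_circ (X : 'I_k -> R * R) (v : 'I_k -> R) :
    (forall t, X t = circ c u r (v t)) -> injective X -> injective v.
  by move=> Xv X_inj t t' vt; apply: X_inj; rewrite !Xv vt.
have [k_gt1|k_le1] := ltnP 1 k.
  case/orP: sep => sep.
    exact: separated_hulls_disjoint Aa Bb (lo_lt_hi_codom k_gt1 (inj_circ _ _ Aa A_inj)) sep zA zB.
  exact: separated_hulls_disjoint Bb Aa (lo_lt_hi_codom k_gt1 (inj_circ _ _ Bb B_inj)) sep zB zA.
pose i0 : 'I_k := Ordinal k_gt0.
have single t : t = i0.
  by apply/val_inj/eqP; rewrite /= -leqn0 -ltnS (leq_trans (ltn_ord t)).
have zA0 := in_hull_const (fun t => congr1 A (single t)) zA.
have zB0 := in_hull_const (fun t => congr1 B (single t)) zB.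
have ab0 : a i0 = b i0 by apply: circ_inj; rewrite -Aa -Bb -zA0.
by have := separated_disjoint sep (codom_f a i0); rewrite ab0 codom_f.
Qed.
End OnCircle.
End InscribedPolygons.

Lemma k_polygon_circle_separation (T : finType) (e : rel T) k : (0 < k)%N ->
  k_polygon_circle k e -> exists f : T -> seq R,
    (forall x, f x != [::]) /\ forall x y, x != y -> e x y = ~~ separated (f x) (f y).
Proof.
move=> k_gt0 [c [r [P [r_gt0 P_inj P_circ P_meet]]]].
have [u [u1 P_pole]] := exists_pole P c r_gt0.
pose a x t := circ_param c u r (P x t).
have Pa x t : P x t = circ c u r (a x t) by apply: circ_paramK.
exists (fun x => codom (a x)); split.
  by move=> x; rewrite -size_eq0 size_codom card_ord -lt0n.
move=> x y xy; apply/idP/idP => [/(P_meet x y xy)[z [zx zy]]|nxy].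
  exact: hulls_meet_not_separated (Pa x) (Pa y) k_gt0 (P_inj x) (P_inj y) zx zy.
by apply/(P_meet x y xy); apply: not_separated_hulls_meet (Pa x) (Pa y) k_gt0 nxy.
Qed.

(** * The crossed graph *)

(* The index [m] of the gadget edges is eliminated, so that edges of [M_n]
   are decided by linear arithmetic. *)
Lemma Medge_dirE n a b : Medge_dir n a b =
  [|| (0 < a < 4 * n) && (b == a.+1),
      (4 * n < b <= 5 * n) && (4 * b == a + 16 * n + 3),
      (5 * n < b <= 6 * n) && (4 * b == a + 20 * n + 2)
    | (4 * n < a <= 5 * n) && (b == a + n)].
Proof.
rewrite /Medge_dir; congr (_ || _).
apply/hasP/idP => [[m /[!mem_iota] m_n /or3P[]/andP[/eqP-> /eqP->]]|]; try lia.
case/or3P => /andP[b_rng /eqP ab].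
- by exists (b - 4 * n); rewrite ?mem_iota; lia.
- by exists (b - 5 * n); rewrite ?mem_iota; lia.
- by exists (a - 4 * n); rewrite ?mem_iota; lia.
Qed.

Definition upair (T : eqType) (x y p q : T) :=
  ((x == p) && (y == q)) || ((x == q) && (y == p)).

Lemma exists_upair (T : finType) (E : rel T) p q (F : T -> T -> bool) :
  (forall u v, E u v = upair u v p q) ->
  [exists u, exists v, E u v && F u v] = F p q || F q p.
Proof.
move=> Epq; apply/existsP/idP => [[u /existsP[v]]|/orP[Fpq|Fqp]].
- by rewrite Epq => /andP[/orP[]/andP[/eqP-> /eqP->] ->]; rewrite ?orbT.
- by exists p; apply/existsP; exists q; rewrite Epq /upair !eqxx.
- by exists q; apply/existsP; exists p; rewrite Epq /upair !eqxx orbT.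
Qed.

Lemma crossing_upair (T : finType) (e E1 E2 : rel T) (s : T -> T) p q x y :
  (forall u v, E1 u v = upair u v p q) -> E2 (s p) (s q) -> E2 (s q) (s p) ->
  crossing e E1 E2 s x y =
  [|| e x y && ~~ (upair x y p q || upair x y (s p) (s q)),
      upair x y p (s q) | upair x y (s p) q].
Proof.
move=> E1pq E2pq E2qp; rewrite /crossing.
rewrite (exists_upair (fun u v => [&& E2 (s u) (s v) & _]) E1pq).
rewrite (exists_upair (fun u v => [&& E2 (s u) (s v) & _]) E1pq) E2pq E2qp /=.
rewrite /upair; congr (_ && ~~ _ || _); first exact: orbACA.
by rewrite [in RHS]orbACA; congr (_ || _); apply: orbC.
Qed.

(* The edge relation of [sigma^{ij}_bowtie(M_n)] on the labels [1..6n] of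
   [v_1..v_6n]. *)
Definition crossed n i j a b :=
  [|| Medge n a b && ~~ (upair a b (4 * n + j) (5 * n + j) || upair a b (4 * n + i) (5 * n + i)),
      upair a b (4 * n + j) (5 * n + i) | upair a b (4 * n + i) (5 * n + j)].

Lemma crossedC n i j : crossed n i j =2 crossed n j i.
Proof. by move=> a b; rewrite /crossed; congr (_ && ~~ _ || _); apply: orbC. Qed.

Section Labels.
Variables (n : nat) (n_gt0 : 0 < n).

Definition lab (x : 'I_(6 * n)) := (val x).+1.

Definition vtx L : 'I_(6 * n) :=
  insubd (Ordinal (leq_trans n_gt0 (leq_pmull n (isT : 0 < 6)))) L.-1.

Lemma lab_inj : injective lab.
Proof. by move=> x y /succn_inj /val_inj. Qed.

Lemma lab_vtx L : 1 <= L <= 6 * n -> lab (vtx L) = L.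
Proof. by move=> L_rng; rewrite /lab val_insubd ifT; lia. Qed.

Lemma upair_lab x y p q : upair (lab x) (lab y) (lab p) (lab q) = upair x y p q.
Proof. by rewrite /upair !(inj_eq lab_inj). Qed.

Lemma upair_vtx x y a b : 1 <= a <= 6 * n -> 1 <= b <= 6 * n ->
  upair x y (vtx a) (vtx b) = upair (lab x) (lab y) a b.
Proof. by move=> a_rng b_rng; rewrite -upair_lab !lab_vtx. Qed.

Lemma H_upair k x y : 1 <= k <= n ->
  H n k x y = upair x y (vtx (4 * n + k)) (vtx (5 * n + k)).
Proof.
move=> k_rng; rewrite upair_vtx; try lia.
by rewrite /H /upair /= [in X in _ || X]andbC.
Qed.
End Labels.

Section Crossed.
Variables (n i j : nat).
Hypotheses (i_rng : 1 <= i <= n) (j_rng : 1 <= j <= n) (ij : i != j).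

Let n_gt0 : 0 < n. Proof. lia. Qed.
Local Notation vtx := (vtx n_gt0).

Lemma sigma_ij_vtx4 : sigma_ij n i j (vtx (4 * n + j)) = vtx (4 * n + i).
Proof.
apply: lab_inj; rewrite lab_vtx; last lia.
rewrite /sigma_ij /liftv /lab val_insubd -/(lab _) lab_vtx; last lia.
rewrite /sigma_inv_nat ifN_eq ?eqxx /sigma_nat; last by apply/eqP; lia.
by rewrite ifN_eq ?eqxx ?ifT; [lia|lia|apply/eqP; lia].
Qed.

Lemma sigma_ij_vtx5 : sigma_ij n i j (vtx (5 * n + j)) = vtx (5 * n + i).
Proof.
apply: lab_inj; rewrite lab_vtx; last lia.
rewrite /sigma_ij /liftv /lab val_insubd -/(lab _) lab_vtx; last lia.
by rewrite /sigma_inv_nat /sigma_nat !eqxx ifT; lia.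
Qed.

Lemma crossing_M x y :
  crossing (M n) (H n j) (H n i) (sigma_ij n i j) x y = crossed n i j (lab x) (lab y).
Proof.
have Hj u v := H_upair n_gt0 u v j_rng; have Hi u v := H_upair n_gt0 u v i_rng.
rewrite (crossing_upair _ _ _ Hj); try by rewrite sigma_ij_vtx4 sigma_ij_vtx5 Hi /upair !eqxx ?orbT.
by rewrite sigma_ij_vtx4 sigma_ij_vtx5 !upair_vtx //; lia.
Qed.
End Crossed.

Section VertexLabels.
Variables (n : nat) (n_gt0 : 0 < n) (e : rel 'I_(6 * n)) (g : rel nat).
Local Notation vtx := (vtx n_gt0).
Local Notation valid := [pred L | 0 < L <= 6 * n].
Hypothesis e_vtx : {in valid &, forall L L', e (vtx L) (vtx L') = g L L'}.

Lemma vtx_eq : {in valid &, forall L L', (vtx L == vtx L') = (L == L')}.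
Proof.
move=> L L' L_ok L'_ok; apply/eqP/eqP => [/(congr1 (@lab n))|->] //.
by rewrite !lab_vtx.
Qed.

Lemma rail_vtx a x x' xt b h w : all valid [:: a, x, x', xt, h & w] ->
  rail g a x x' xt b h w ->
  rail e (vtx a) (vtx x) (vtx x') (vtx xt) (vtx b) (vtx h) (map vtx w).
Proof.
move=> /allP ok /and4P[gpath bW gfar gadj].
have [a_ok x_ok x'_ok xt_ok] : [/\ valid a, valid x, valid x' & valid xt].
  by split; apply: ok; rewrite !inE eqxx ?orbT.
have hw_ok y : y \in h :: w -> valid y.
  by move=> yW; apply/ok/mem_behead/mem_behead/mem_behead/mem_behead.
have far_vtx y z : y \in h :: w -> valid z -> far e (vtx y) (vtx z) = far g y z.
  by move=> /hw_ok y_ok z_ok; rewrite /far vtx_eq ?e_vtx.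
apply/and4P; split; rewrite -?map_cons.
- rewrite path_map -(eq_in_path (e := g) (P := valid)) // => [y z y_ok z_ok|].
    by rewrite /= e_vtx.
  by apply/allP => y; apply: hw_ok.
- exact: map_f.
- rewrite all_map; apply/allP => y yW /=.
  by rewrite !far_vtx //; apply: (allP gfar).
- rewrite has_map; case/hasP: gadj => y yW /andP[yxt gyxt]; apply/hasP; exists y => //=.
  by have y_ok := hw_ok y yW; rewrite /adjacent vtx_eq ?e_vtx ?yxt.
Qed.
End VertexLabels.

(* [lia] alone is far too slow on the boolean formula unfolding [crossed]. *)
Ltac split_bool tac :=
  lazymatch goal with
  | |- is_true (_ && _) => apply/andP; split; split_bool tac
  | |- is_true (_ || _) =>
      first [apply/orP; left; split_bool tac | apply/orP; right; split_bool tac]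
  | _ => tac
  end.

Ltac decide_crossed :=
  rewrite /crossed /Medge /upair !Medge_dirE ?negb_or ?negb_and ?negbK;
  split_bool lia.

Ltac decide_rail :=
  rewrite /rail /far /adjacent /=;
  split_bool ltac:(first [exact: mem_head | decide_crossed | lia]).

Lemma path_iota (g : rel nat) m len :
  (forall t, m <= t < m + len -> g t t.+1) -> path g m (iota m.+1 len).
Proof.
elim: len m => [//|len IHlen] m gm /=.
by rewrite gm ?IHlen // => [t t_rng|]; [apply: gm|]; lia.
Qed.

(* With [i = i0 + 1] and [j = j0 + 1], the hub [v_{4j-2}] is adjacent to the
   pairwise far feet [v_{4j-3}], [v_{5n+j}] and [v_{4j-1}]; the rails start at
   [v_{4i-3}] and reach the feet through [v_{4n+j}], [v_{4n+i}] and [v_{4j}]. *)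
Section CrossedRails.
Variables (n i0 j0 : nat).
Hypotheses (ji : j0 < i0) (i_n : i0 < n).
Local Notation g := (crossed n i0.+1 j0.+1).

Lemma crossed_hub :
  [&& g (4 * j0 + 2) (4 * j0 + 1), g (4 * j0 + 2) (5 * n + j0.+1) & g (4 * j0 + 2) (4 * j0 + 3)].
Proof. by split_bool decide_crossed. Qed.

Lemma crossed_feet_far :
  [&& far g (4 * j0 + 1) (5 * n + j0.+1), far g (4 * j0 + 1) (4 * j0 + 3)
    & far g (5 * n + j0.+1) (4 * j0 + 3)].
Proof. by rewrite /far; split_bool ltac:(first [decide_crossed | lia]). Qed.

Lemma crossed_rail1 :
  rail g (4 * j0 + 2) (5 * n + j0.+1) (4 * j0 + 3) (4 * j0 + 1) (4 * i0 + 1)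
    (4 * i0 + 1) [:: 4 * i0 + 2; 5 * n + i0.+1; 4 * n + j0.+1].
Proof. by decide_rail. Qed.

Lemma crossed_rail2 :
  rail g (4 * j0 + 2) (4 * j0 + 1) (4 * j0 + 3) (5 * n + j0.+1) (4 * i0 + 1)
    (4 * i0 + 1) [:: 4 * n + i0.+1].
Proof. by decide_rail. Qed.

Lemma crossed_rail3 :
  rail g (4 * j0 + 2) (4 * j0 + 1) (5 * n + j0.+1) (4 * j0 + 3) (4 * i0 + 1)
    (4 * j0 + 4) (iota (4 * j0 + 4).+1 (4 * (i0 - j0) - 3)).
Proof.
have in_rail t : t \in 4 * j0 + 4 :: iota (4 * j0 + 4).+1 (4 * (i0 - j0) - 3) =
    (4 * j0 + 4 <= t <= 4 * i0 + 1).
  by rewrite inE mem_iota; apply/idP/idP; lia.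
apply/and4P; split.
- by apply: path_iota => t t_rng; decide_crossed.
- by rewrite in_rail; lia.
- by apply/allP => t; rewrite in_rail => t_rng; rewrite /far; split_bool
    ltac:(first [decide_crossed | lia]).
- by apply/hasP; exists (4 * j0 + 4); rewrite ?mem_head // /adjacent; split_bool
    ltac:(first [decide_crossed | lia]).
Qed.
End CrossedRails.

Lemma crossed_not_k_polygon_circle n i j k (e : rel 'I_(6 * n)) :
  0 < j < i -> i <= n -> 0 < k -> (forall x y, e x y = crossed n i j (lab x) (lab y)) ->
  ~ k_polygon_circle k e.
Proof.
case: i j => [|i0] [|j0] // /andP[_ /[!ltnS] ji] i_n k_gt0 eE.
move/(k_polygon_circle_separation k_gt0) => [f [f_neq0 f_model]].
have n_gt0 : 0 < n by lia.
have e_vtx : {in [pred L | 0 < L <= 6 * n] &, forall L L',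
    e (vtx n_gt0 L) (vtx n_gt0 L') = crossed n i0.+1 j0.+1 L L'}.
  by move=> L L' L_ok L'_ok; rewrite eE !lab_vtx.
have far_vtx L L' : 0 < L <= 6 * n -> 0 < L' <= 6 * n ->
    far e (vtx n_gt0 L) (vtx n_gt0 L') = far (crossed n i0.+1 j0.+1) L L'.
  by move=> L_ok L'_ok; rewrite /far vtx_eq ?e_vtx.
have /and3P[a1 a2 a3] := crossed_hub ji i_n.
have /and3P[f12 f13 f23] := crossed_feet_far ji i_n.
apply: (no_three_rails_model f_neq0 f_model _ _ _ _ _ _
  (rail_vtx e_vtx _ (crossed_rail1 ji i_n)) (rail_vtx e_vtx _ (crossed_rail2 ji i_n))
  (rail_vtx e_vtx _ (crossed_rail3 ji i_n))).
- by rewrite e_vtx // inE /=; lia.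
- by rewrite e_vtx // inE /=; lia.
- by rewrite e_vtx // inE /=; lia.
- by rewrite far_vtx //; lia.
- by rewrite far_vtx //; lia.
- by rewrite far_vtx //; lia.
all: by rewrite /=; split_bool ltac:(first [lia | apply/allP => t; rewrite mem_iota inE /=; lia]).
Qed.

Theorem lemma7 (n : nat) (hn : 2 < n) (k : nat) (hk : 0 < k) (i j : nat)
  (hi : 1 <= i <= n) (hj : 1 <= j <= n) (hij : i != j) :
  ~ k_polygon_circle k (crossing (M n) (H n j) (H n i) (sigma_ij n i j)).
Proof.
have eE := crossing_M hi hj hij.
case: (ltngtP i j) => [ij|ji|ij]; last by rewrite ij eqxx in hij.
- apply: (crossed_not_k_polygon_circle (i := j) (j := i)) => //; try lia.
  by move=> x y; rewrite eE crossedC.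
- by apply: crossed_not_k_polygon_circle eE => //; lia.
Qed.
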